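(* Let $\mathcal{H}$ be a finite-dimensional Hilbert space and let $\mathscr{N}:\mathcal{H}\to(-\infty,\infty]$ be feasible. Then $\mathscr{N}^{**}$ is feasible.
   Context: $\mathcal{H}$ is regarded as a real inner product space (if complex, with inner product $\mathrm{Re}\langle\cdot,\cdot\rangle$). A functional $\mathscr{N}:\mathcal{H}\to(-\infty,\infty]$ is proper if it is not identically $\infty$. It is called feasible if it is lower semi-continuous, proper, bounded below, and satisfies $\lim_{\|x\|\to\infty}\mathscr{N}(x)/\|x\|=\infty$. The Fenchel conjugate is $\mathscr{N}^*(y)=\sup_x \langle x,y\rangle-\mathscr{N}(x)$, and $\mathscr{N}^{**}=(\mathscr{N}^* )^*$ (the lower semi-continuous convex envelope of $\mathscr{N}$). *)

From HB Require Import structures.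
From mathcomp Require Import all_boot all_order all_algebra.
From mathcomp Require Import classical_sets boolp reals constructive_ereal ereal.
Set Implicit Arguments. Unset Strict Implicit. Unset Printing Implicit Defensive.
Import Order.TTheory GRing.Theory Num.Theory.
Local Open Scope ring_scope.
Local Open Scope classical_set_scope.

Definition is_inner_product (R : realType) (V : lmodType R) (ip : V -> V -> R) : Prop :=
  [/\ (forall x y, ip x y = ip y x),
      (forall (a : R) x y z, ip (a *: x + y) z = a * ip x z + ip y z)
    & (forall x, x != 0 -> 0 < ip x x)].

Definition ipnorm (R : realType) (V : lmodType R) (ip : V -> V -> R) (x : V) : R :=
  Num.sqrt (ip x x).

Definition ip_lsc (R : realType) (V : lmodType R) (ip : V -> V -> R)
    (N : V -> \bar R) : Prop :=
  forall x (t : \bar R), (t < N x)%E ->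
    exists2 e : R, 0 < e & forall y, ipnorm ip (y - x) < e -> (t < N y)%E.

Definition feasible (R : realType) (V : lmodType R) (ip : V -> V -> R)
    (N : V -> \bar R) : Prop :=
  [/\ (forall x, N x != -oo%E),
      ip_lsc ip N,
      (exists x, N x != +oo%E),
      (exists b : R, forall x, (b%:E <= N x)%E)
    & (forall M : R, exists r : R, forall x, r < ipnorm ip x ->
          (M%:E <= N x * ((ipnorm ip x)^-1)%:E)%E)].

Definition fconj (R : realType) (V : lmodType R) (ip : V -> V -> R)
    (N : V -> \bar R) : V -> \bar R :=
  fun y => ereal_sup [set ((ip x y)%:E - N x)%E | x in [set: V]].

(* N** = sup_y (<y, .> - N* y) is a supremum of continuous affine functions, so it
   is lower semicontinuous, and N** <= N (Fenchel-Young), so it is proper.  Lower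
   bounds of norm type transfer through double conjugation: if
   N z >= M ||z|| - C for all z with M >= 0, then Cauchy-Schwarz gives N* <= C on
   the ball of radius M, and testing N** x against y = (M / ||x||) x gives
   N** x >= M ||x|| - C.  With M = 0 this is boundedness from below, and
   supercoercivity is exactly the existence of such a bound for every M. *)
From mathcomp Require Import all_boot all_order all_algebra.
From mathcomp Require Import classical_sets boolp reals constructive_ereal ereal.
From mathcomp Require Import ring lra.
Import Order.TTheory GRing.Theory Num.Theory.
Local Open Scope ring_scope.
Local Open Scope classical_set_scope.
Set Implicit Arguments. Unset Strict Implicit. Unset Printing Implicit Defensive.

Section InnerProduct.
Variables (R : realType) (V : lmodType R) (ip : V -> V -> R).
Hypothesis hip : is_inner_product ip.

Lemma ip_sym x y : ip x y = ip y x.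
Proof. by case: hip. Qed.

Lemma ip_lin a x y z : ip (a *: x + y) z = a * ip x z + ip y z.
Proof. by case: hip. Qed.

Lemma ip0l z : ip 0 z = 0.
Proof.
have := ip_lin 1 0 0 z; rewrite scaler0 addr0 mul1r => h.
by apply: (addrI (ip 0 z)); rewrite addr0 -h.
Qed.

Lemma ipDl x y z : ip (x + y) z = ip x z + ip y z.
Proof. by rewrite -[x in LHS]scale1r ip_lin mul1r. Qed.

Lemma ipZl a x z : ip (a *: x) z = a * ip x z.
Proof. by rewrite -[_ *: _]addr0 ip_lin ip0l addr0. Qed.

Lemma ipNl x z : ip (- x) z = - ip x z.
Proof. by rewrite -scaleN1r ipZl mulN1r. Qed.

Lemma ipDr x y z : ip z (x + y) = ip z x + ip z y.
Proof. by rewrite ip_sym ipDl !(ip_sym z). Qed.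

Lemma ipZr a x z : ip z (a *: x) = a * ip z x.
Proof. by rewrite ip_sym ipZl ip_sym. Qed.

Lemma ipNr x z : ip z (- x) = - ip z x.
Proof. by rewrite ip_sym ipNl ip_sym. Qed.

Lemma ip_ge0 x : 0 <= ip x x.
Proof. case: hip => _ _ h; have [->|/h/ltW//] := eqVneq x 0; by rewrite ip0l. Qed.

Lemma ipnorm_ge0 x : 0 <= ipnorm ip x.
Proof. exact: sqrtr_ge0. Qed.

Lemma ipnorm0 : ipnorm ip 0 = 0.
Proof. by rewrite /ipnorm ip0l sqrtr0. Qed.

Lemma ipnorm_gt0 x : x != 0 -> 0 < ipnorm ip x.
Proof. by case: hip => _ _ h /h; rewrite sqrtr_gt0. Qed.

Lemma ipnorm_sq x : ipnorm ip x ^+ 2 = ip x x.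
Proof. by rewrite sqr_sqrtr // ip_ge0. Qed.

Lemma ipnormZ a x : ipnorm ip (a *: x) = `|a| * ipnorm ip x.
Proof. by rewrite /ipnorm ipZl ipZr mulrA -expr2 sqrtrM ?sqr_ge0 // sqrtr_sqr. Qed.

Lemma ipnormN x : ipnorm ip (- x) = ipnorm ip x.
Proof. by rewrite -scaleN1r ipnormZ normrN normr1 mul1r. Qed.

Lemma cauchy_schwarz x y : ip x y <= ipnorm ip x * ipnorm ip y.
Proof.
have [->|x0] := eqVneq x 0; first by rewrite ip0l mulr_ge0 ?ipnorm_ge0.
have [->|y0] := eqVneq y 0; first by rewrite ip_sym ip0l mulr_ge0 ?ipnorm_ge0.
have a0 := ipnorm_gt0 x0; have b0 := ipnorm_gt0 y0.
set a := ipnorm ip x in a0 *; set b := ipnorm ip y in b0 *; set c := ip x y.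
have := ip_ge0 ((b / a) *: x - y).
rewrite ipDl ipZl ipNl !ipDr !ipZr !ipNr (ip_sym y x) -!ipnorm_sq -/a -/b -/c.
have -> : b / a * (b / a * a ^+ 2 - c) - (b / a * c - b ^+ 2)
          = 2 * b * (a * b - c) / a by field; rewrite gt_eqF.
by rewrite pmulr_lge0 ?invr_gt0 // pmulr_rge0 ?mulr_gt0 // subr_ge0.
Qed.

Lemma cauchy_schwarz_norm x y : `|ip x y| <= ipnorm ip x * ipnorm ip y.
Proof.
by rewrite ler_norml cauchy_schwarz andbT lerNl -ipNl -(ipnormN x) cauchy_schwarz.
Qed.

Lemma ip_lsc_sup (I : Type) (f : I -> V -> \bar R) :
  (forall i, ip_lsc ip (f i)) ->
  ip_lsc ip (fun x => ereal_sup [set f i x | i in [set: I]]).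
Proof.
move=> f_lsc x t /ereal_sup_gt[_ [i _ <-] tfi].
have [e e0 he] := f_lsc i x t tfi.
exists e => // y /he tfy; apply: lt_le_trans tfy _.
by apply: ereal_sup_ubound; exists i.
Qed.

Lemma ip_lsc_affine y (c : \bar R) : ip_lsc ip (fun x => ((ip y x)%:E - c)%E).
Proof.
move=> x t; case: c => [s| |] /=; last 2 first.
- by rewrite ltNge leNye.
- by move=> tl; exists 1 => // z _.
case: t => [t| |] ht; last 2 first.
- by move: ht; rewrite ltNge leey.
- by exists 1 => // z _; rewrite ltNye.
rewrite -EFinB lte_fin in ht.
set d := ip y x - s - t; have d0 : 0 < d by rewrite /d; lra.
set n := ipnorm ip y; have n1 : 0 < n + 1 by rewrite ltr_wpDl ?ipnorm_ge0.
exists (d / (n + 1)); first by rewrite divr_gt0.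
move=> z hz; rewrite -EFinB lte_fin.
have -> : ip y z = ip y x + ip y (z - x) by rewrite -ipDr addrC subrK.
have := cauchy_schwarz_norm y (z - x); rewrite -/n ler_norml => /andP[hl _].
have : n * ipnorm ip (z - x) <= n * (d / (n + 1)).
  by rewrite ler_wpM2l ?ipnorm_ge0 // ltW.
have : n * (d / (n + 1)) < d.
  by rewrite mulrA ltr_pdivrMr //; nra.
have dE : d = ip y x - s - t by [].
lra.
Qed.

Lemma fconj_lsc (G : V -> \bar R) : ip_lsc ip (fconj ip G).
Proof. by rewrite /fconj; apply: ip_lsc_sup => y; apply: ip_lsc_affine. Qed.

Lemma fconj_ge (G : V -> \bar R) x y : ((ip x y)%:E - G x <= fconj ip G y)%E.
Proof. by apply: ereal_sup_ubound; exists x. Qed.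

Lemma fconj_fconj_le (G : V -> \bar R) x : (fconj ip (fconj ip G) x <= G x)%E.
Proof.
apply: ge_ereal_sup => _ [y _ <-]; have := fconj_ge G x y.
rewrite ip_sym; case: (G x) => [g| |] /=; last 2 first.
- by rewrite leey.
- by rewrite leye_eq => /eqP ->.
case: (fconj ip G y) => [s| |] //=; last by rewrite leNye.
by rewrite -!EFinB !lee_fin => h; lra.
Qed.

Definition norm_minorant (G : V -> \bar R) (M C : R) : Prop :=
  forall x, ((M * ipnorm ip x - C)%:E <= G x)%E.

Lemma norm_minorant0 (G : V -> \bar R) (b : R) :
  norm_minorant G 0 (- b) <-> forall x, (b%:E <= G x)%E.
Proof. by rewrite /norm_minorant; under eq_forall do rewrite mul0r sub0r opprK. Qed.

Lemma fconj_le_of_norm_minorant (G : V -> \bar R) M C y :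
  norm_minorant G M C -> ipnorm ip y <= M -> (fconj ip G y <= C%:E)%E.
Proof.
move=> hG yM; apply: ge_ereal_sup => _ [z _ <-]; have := hG z.
have : ip z y <= M * ipnorm ip z.
  by rewrite (le_trans (cauchy_schwarz z y)) // mulrC ler_wpM2r ?ipnorm_ge0.
case: (G z) => [g| |] /=; last 2 first.
- by rewrite leNye.
- by rewrite leeNy_eq.
by rewrite -EFinB !lee_fin; lra.
Qed.

Lemma fconj_ge_of_le_on_ball (G : V -> \bar R) M C :
  0 <= M -> (forall y, ipnorm ip y <= M -> (G y <= C%:E)%E) ->
  norm_minorant (fconj ip G) M C.
Proof.
move=> M0 hG x.
have [->|x0] := eqVneq x 0.
  apply: le_trans (fconj_ge G 0 0); rewrite ip0l.
  have := hG 0; rewrite ipnorm0 mulr0 sub0r => /(_ M0).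
  case: (G 0) => [g| |] //= hg; last by rewrite leey.
  by rewrite -EFinD !lee_fin in hg *; lra.
have xpos := ipnorm_gt0 x0.
set y := (M / ipnorm ip x) *: x.
have yM : ipnorm ip y <= M.
  by rewrite ipnormZ ger0_norm ?divr_ge0 ?ipnorm_ge0 // divfK ?gt_eqF.
apply: le_trans (fconj_ge G y x).
have -> : ip y x = M * ipnorm ip x.
  by rewrite ipZl -ipnorm_sq expr2 mulrA divfK ?gt_eqF.
move: (hG y yM); case: (G y) => [g| |] //= hg; last by rewrite leey.
by rewrite -EFinD !lee_fin in hg *; lra.
Qed.

Lemma fconj_fconj_norm_minorant (G : V -> \bar R) M C :
  0 <= M -> norm_minorant G M C -> norm_minorant (fconj ip (fconj ip G)) M C.
Proof.
move=> M0 hG; apply: fconj_ge_of_le_on_ball => // y.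
exact: fconj_le_of_norm_minorant.
Qed.

Definition supercoercive (G : V -> \bar R) : Prop :=
  forall M : R, exists r : R, forall x, r < ipnorm ip x ->
    (M%:E <= G x * ((ipnorm ip x)^-1)%:E)%E.

Lemma supercoercive_norm_minorant (G : V -> \bar R) (b : R) :
  (forall x, (b%:E <= G x)%E) -> supercoercive G ->
  forall M, exists C, norm_minorant G M C.
Proof.
move=> Gb Gsc M; have [r hr] := Gsc M.
(* below radius |r| use the lower bound b, beyond it the supercoercivity estimate *)
exists (`|M| * `|r| + `|b|) => x.
have x0 := ipnorm_ge0 x.
have [xr|xr] := lerP (ipnorm ip x) `|r|.
  apply: le_trans (Gb x); rewrite lee_fin.
  have : M * ipnorm ip x <= `|M| * `|r|.
    apply: le_trans (ler_norm _) _; rewrite normrM (ger0_norm x0).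
    by rewrite ler_wpM2l.
  have := ler_norm (- b); rewrite normrN; lra.
have xpos : 0 < ipnorm ip x by apply: le_lt_trans xr.
have := hr x (le_lt_trans (ler_norm r) xr); have := Gb x.
case: (G x) => [g| |] //= _; last by rewrite leey.
rewrite -EFinM !lee_fin ler_pdivlMr // => h.
have : 0 <= `|M| * `|r| + `|b| by rewrite addr_ge0 ?mulr_ge0.
lra.
Qed.

Lemma norm_minorant_supercoercive (G : V -> \bar R) :
  (forall M, 0 <= M -> exists C, norm_minorant G M C) -> supercoercive G.
Proof.
move=> hG M; have M1 : 0 <= `|M| + 1 by rewrite addr_ge0.
have [C hC] := hG _ M1.
exists `|C| => x xC; have xpos : 0 < ipnorm ip x by apply: le_lt_trans xC.
apply: le_trans (lee_wpmul2r _ (hC x)); last by rewrite lee_fin invr_ge0 ltW.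
rewrite -EFinM lee_fin mulrBl mulrK ?unitfE ?gt_eqF //.
have : C / ipnorm ip x <= 1.
  by rewrite ler_pdivrMr // mul1r ltW // (le_lt_trans (ler_norm C)).
have := ler_norm M; lra.
Qed.

End InnerProduct.

Theorem proposition2 (R : realType) (V : vectType R) (ip : V -> V -> R)
    (hip : is_inner_product ip) (N : V -> \bar R) :
  feasible ip N -> feasible ip (fconj ip (fconj ip N)).
Proof.
move=> [_ _ [x0 Nx0] [b Nb] Nsc].
have Nssb : forall x, (b%:E <= fconj ip (fconj ip N) x)%E.
  by apply/norm_minorant0/fconj_fconj_norm_minorant => //; apply/norm_minorant0.
split.
- by move=> x; have := Nssb x; case: (fconj _ _ x).
- exact: fconj_lsc.
- exists x0; have := fconj_fconj_le hip N x0.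
  by move: Nx0; case: (N x0) => [n| |] //; case: (fconj _ _ x0).
- by exists b.
- apply: norm_minorant_supercoercive => M M0.
  have [C hC] := supercoercive_norm_minorant Nb Nsc M.
  by exists C; apply: fconj_fconj_norm_minorant.
Qed.
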